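(* There exist a continuum $K$ and a pairwise disjoint sequence $(f_n)_{n\in\mathbb{N}}$ in $C_1(K)$ such that $K$ is an extension of $[0,1]$ by continuous functions (i.e. $K=[0,1]((g_n)_{n\in\mathbb{N}})$ for some pairwise disjoint sequence $(g_n)_{n\in\mathbb{N}}$ in $C_1([0,1])$) and the extension $K((f_n)_{n\in\mathbb{N}})$ is disconnected.
   Context: All spaces are Hausdorff. A continuum is a metrizable, compact, connected space. For a compact space $K$, $C_1(K)$ denotes the set of continuous functions $K\to[0,1]$; $f,g$ are disjoint if $f\cdot g=0$. For a real function $f$ on $K$, $supp(f)$ is the closure of $\{x\in K: f(x)\neq 0\}$. For a pairwise disjoint sequence $(f_n)_{n\in\mathbb{N}}$ in $C_1(K)$, let $D((f_n)_{n\in\mathbb{N}})$ be the union of all open sets $U\subseteq K$ such that $\{n: U\cap supp(f_n)\neq\emptyset\}$ is finite. The extension of $K$ by $(f_n)_{n\in\mathbb{N}}$, denoted $K((f_n)_{n\in\mathbb{N}})$, is the closure in $K\times[0,1]$ of the graph of the function $\sum_{n\in\mathbb{N}} f_n$ restricted to $D((f_n)_{n\in\mathbb{N}})$. *)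

From HB Require Import structures.
From mathcomp Require Import all_boot all_order all_algebra.
From mathcomp Require Import all_classical all_reals all_analysis.
Set Implicit Arguments. Unset Strict Implicit. Unset Printing Implicit Defensive.
Import Order.TTheory GRing.Theory Num.Theory.
Import numFieldTopology.Exports numFieldNormedType.Exports.
Local Open Scope classical_set_scope.
Local Open Scope ring_scope.

Section Ext.
Variables (R : realType) (T : topologicalType).

Definition unit_int : set R := [set x | 0 <= x <= 1].

Definition inC1 (K : set T) (f : T -> R) : Prop :=
  {within K, continuous f} /\ (forall x, K x -> 0 <= f x <= 1).

Definition pw_disjoint (K : set T) (f : nat -> T -> R) : Prop :=
  forall n m, n <> m -> forall x, K x -> f n x * f m x = 0.

Definition supp (K : set T) (f : T -> R) : set T :=
  K `&` closure [set x | K x /\ f x <> 0].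

(* D((f_n)): union of all (relatively) open U in K meeting only finitely many
   supports; open subsets of K are exactly the traces V `&` K, V open in T. *)
Definition Dset (K : set T) (f : nat -> T -> R) : set T :=
  [set x | K x /\ exists V : set T, [/\ open V, V x &
     finite_set [set n | (V `&` K `&` supp K (f n)) !=set0]]].

Definition sumf (f : nat -> T -> R) (x : T) : R :=
  limn (fun N => \sum_(i < N) f i x).

Definition extension (K : set T) (f : nat -> T -> R) : set (T * R) :=
  (K `*` unit_int) `&`
  closure [set p | Dset K f p.1 /\ p.2 = sumf f p.1].

End Ext.

From HB Require Import structures.
From mathcomp Require Import all_boot all_order all_algebra.
From mathcomp Require Import all_classical all_reals all_analysis.
From mathcomp Require Import ring lra zify.
Set Implicit Arguments.
Unset Strict Implicit.
Unset Printing Implicit Defensive.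
Import Order.TTheory GRing.Theory Num.Theory.
Import numFieldTopology.Exports numFieldNormedType.Exports.
Local Open Scope classical_set_scope.
Local Open Scope ring_scope.

(* The nodes 1/2 - 1/(k+1) increase to 1/2, and the tent functions sitting on
   consecutive triples of nodes form a partition of unity on [0, 1/2).  The
   odd-indexed tents g_n give K = [0,1]((g_n)), a topologist's sine curve:
   the graph of their sum oscillates between 0 and 1 near 1/2, so K is the
   closure of that graph over [0, 1/2) (which contains the segment
   {1/2} x [0,1]) together with [1/2, 1] x {0}; the two pieces meet at
   (1/2, 0), hence K is a continuum.  The even-indexed tents, composed with
   the first projection, give f_n on K whose sum is 1 - y on the graph left of
   1/2 and 0 right of it.  A point (1/2, t) with 0 < t < 1 is the limit of
   points (x_n, t) in the support of f_n, so it is not in D((f_n)); the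
   extension therefore lies in the disjoint closed sets {x <= 1/2, y + z = 1}
   and {x >= 1/2, y + z = 0}, and meets both. *)

Section topology.
Context {T : topologicalType}.

Lemma closed_preimage {S U : topologicalType} (u : S -> U) (D : set U) :
  continuous u -> closed D -> closed (u @^-1` D).
Proof. by move=> cu; apply: preimage_closed => x _; exact: cu. Qed.

Lemma closed_setX {U : topologicalType} (A : set T) (B : set U) :
  closed A -> closed B -> closed (A `*` B).
Proof.
move=> cA cB; have -> : A `*` B = fst @^-1` A `&` snd @^-1` B by [].
apply: closedI; apply: closed_preimage => // p; [exact: cvg_fst|exact: cvg_snd].
Qed.

Lemma not_connected_closed_cover (A C D : set T) :
  closed C -> closed D -> C `&` D = set0 -> A `<=` C `|` D ->
  A `&` C !=set0 -> A `&` D !=set0 -> ~ connected A.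
Proof.
move=> cC cD CD0 ACD AC0 [d [Ad Dd]] conA.
have AC : A `&` C = A.
  apply: conA => //; last by exists C.
  exists (~` D); first exact: closed_openC.
  apply/seteqP; split=> x [Ax Cx]; split=> //.
    by move=> Dx; have : (C `&` D) x by []; rewrite CD0.
  by have [|] := ACD x Ax.
have : (C `&` D) d by split=> //; rewrite -AC in Ad; case: Ad.
by rewrite CD0.
Qed.

Lemma closure_graph_near {R : realType} (A : set (T * R)) (u : T -> R) p :
  continuous u -> (\forall z \near p.1, forall t, A (z, t) -> t = u z) ->
  closure A p -> p.2 = u p.1.
Proof.
move=> cu Au clAp; apply: contrapT => /eqP neq.
have graph_closed : closed [set q : T * R | q.2 - u q.1 = 0].
  apply: (closed_preimage (u := fun q : T * R => q.2 - u q.1) _ (@closed_eq _ 0)).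
  move=> q; apply: cvgB; first exact: cvg_snd.
  by apply: continuous_comp; [exact: cvg_fst|exact: cu].
have off_graph : nbhs p (~` [set q : T * R | q.2 - u q.1 = 0]).
  apply: open_nbhs_nbhs; split; first exact: closed_openC.
  by move=> /eqP; rewrite subr_eq0; exact/negP.
have near_p : nbhs p [set q | forall t, A (q.1, t) -> t = u q.1].
  have fst_p : fst @ nbhs p --> p.1 by exact: cvg_fst.
  exact: (fst_p _ Au).
have [[z t] [Azt [/= + /(_ t Azt) tu]]] := clAp _ (filterI off_graph near_p).
by rewrite tu subrr.
Qed.

End topology.

Section extension_theory.
Context {R : realType} {T : topologicalType}.
Implicit Types (K : set T) (f : nat -> T -> R).

Lemma sumf_eventually0 f x M : (forall i, (M <= i)%N -> f i x = 0) ->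
  sumf f x = \sum_(i < M) f i x.
Proof.
move=> f0; apply: lim_near_cst; first exact: Rhausdorff.
near=> N; have MN : (M <= N)%N by near: N; exists M.
rewrite -(subnKC MN) big_split_ord /= [X in _ + X]big1 ?addr0 // => i _.
by apply: f0; rewrite leq_addr.
Unshelve. all: by end_near.
Qed.

Lemma sumf_single f x i0 : (forall i, i != i0 -> f i x = 0) -> sumf f x = f i0 x.
Proof.
move=> f0; rewrite (@sumf_eventually0 _ _ i0.+1) => [|i]; last first.
  by move=> i0i; apply: f0; rewrite neq_ltn i0i orbT.
rewrite big_ord_recr /= big1 ?add0r // => i _.
by apply: f0; rewrite neq_ltn ltn_ord.
Qed.

Lemma sumf_in01 K f x : (forall n, inC1 K (f n)) -> pw_disjoint K f -> K x ->
  0 <= sumf f x <= 1.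
Proof.
move=> fC1 fdisj Kx; have [[i /eqP fi]|f0] := pselect (exists i, f i x <> 0).
  rewrite (@sumf_single _ _ i) => [|j /eqP ji]; first exact: (fC1 i).2.
  by have /eqP := fdisj j i ji x Kx; rewrite mulf_eq0 (negPf fi) orbF => /eqP.
have {}f0 j : f j x = 0 by apply: contrapT => fj; apply: f0; exists j.
by rewrite (@sumf_single _ _ 0%N) // f0 lexx ler01.
Qed.

Lemma supp_neq0 K (u : T -> R) x : K x -> u x != 0 -> supp K u x.
Proof. by move=> Kx /eqP ux; split=> //; apply: subset_closure. Qed.

Lemma supp_sub K (u : T -> R) (C : set T) : closed C ->
  (forall x, K x -> u x != 0 -> C x) -> supp K u `<=` C.
Proof.
move=> cC uC x [_]; rewrite closureE; apply: smallest_sub cC _ x => y [Ky /eqP].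
exact: uC.
Qed.

Lemma Dset_intro K f x (V : set T) N : K x -> open V -> V x ->
  (forall n y, (N <= n)%N -> V y -> ~ supp K (f n) y) -> Dset K f x.
Proof.
move=> Kx oV Vx fV; split=> //; exists V; split=> //.
apply: sub_finite_set (finite_II N) => n [y [[Vy _] fy]] /=.
by rewrite ltnNge; apply/negP => Nn; exact: fV n y Nn Vy fy.
Qed.

Lemma not_Dset_cvg K f (u : nat -> T) x :
  (forall n, supp K (f n) (u n)) -> u @ \oo --> x -> ~ Dset K f x.
Proof.
move=> fu ux [_ [V [oV Vx finV]]].
have [N _ uV] := ux _ (open_nbhs_nbhs (conj oV Vx)).
apply: (infinite_setD infinite_nat (finite_II N)); apply: sub_finite_set finV.
move=> n [_ /negP]; rewrite -leqNgt => Nn.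
by exists (u n); split; [split; [exact: uV|exact: (fu n).1]|exact: fu].
Qed.

Lemma unit_intE : @unit_int R = `[0, 1]%classic.
Proof. by apply/seteqP; split=> x; rewrite /= in_itv. Qed.

Lemma compact_extension K f : compact K -> compact (extension K f).
Proof.
move=> cK; apply: compact_closedI; last exact: closed_closure.
by apply: compact_setX cK _; rewrite unit_intE; exact: segment_compact.
Qed.

Lemma closed_extension K f : closed K -> closed (extension K f).
Proof.
move=> cK; apply: closedI; last exact: closed_closure.
apply: closed_setX cK _.
by rewrite unit_intE; apply: compact_closed; [exact: Rhausdorff|exact: segment_compact].
Qed.

Lemma extension_graph K f x : (forall n, inC1 K (f n)) -> pw_disjoint K f ->
  Dset K f x -> extension K f (x, sumf f x).
Proof.
move=> fC1 fdisj Dx; split; last exact: subset_closure.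
by split; [exact: Dx.1|exact: sumf_in01 Dx.1].
Qed.

End extension_theory.

Section tents.
Context {R : realType}.

Definition hat (a b c x : R) : R :=
  Num.max 0 (Num.min ((x - a) / (b - a)) ((c - x) / (c - b))).

Lemma continuous_hat a b c : continuous (hat a b c).
Proof.
move=> x; rewrite /hat.
pose up x := (x - a) / (b - a); pose down x := (c - x) / (c - b).
apply: (@continuous_max _ _ (fun=> 0) (fun x => Num.min (up x) (down x))).
  exact: cvg_cst.
apply: (@continuous_min _ _ up down);
  by apply: cvgMl; apply: cvgB => //; exact: cvg_cst.
Qed.

Section hat_shape.
Variables (a b c : R).
Hypotheses (ab : a < b) (bc : b < c).

Lemma hat_ge0 x : 0 <= hat a b c x.
Proof. by rewrite /hat le_max lexx. Qed.

Lemma hat_rise x : a <= x <= b -> hat a b c x = (x - a) / (b - a).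
Proof.
move=> /andP[ax xb]; have xab : (x - a) / (b - a) <= 1.
  by rewrite ler_pdivrMr ?subr_gt0 // mul1r lerD2r.
rewrite /hat (@min_idPl _ _ _ _ (le_trans xab _)); last first.
  by rewrite ler_pdivlMr ?subr_gt0 // mul1r lerD2l lerN2.
by apply/max_idPr; rewrite divr_ge0 ?subr_ge0 // ltW.
Qed.

Lemma hat_fall x : b <= x <= c -> hat a b c x = (c - x) / (c - b).
Proof.
move=> /andP[bx xc]; have xbc : (c - x) / (c - b) <= 1.
  by rewrite ler_pdivrMr ?subr_gt0 // mul1r lerD2l lerN2.
rewrite /hat (@min_idPr _ _ _ _ (le_trans xbc _)); last first.
  by rewrite ler_pdivlMr ?subr_gt0 // mul1r lerD2r.
by apply/max_idPr; rewrite divr_ge0 ?subr_ge0 // ltW.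
Qed.

Lemma hat_le1 x : hat a b c x <= 1.
Proof.
rewrite /hat ge_max ler01 ge_min; apply/orP; have [xb|bx] := lerP x b.
  by left; rewrite ler_pdivrMr ?subr_gt0 // mul1r lerD2r.
by right; rewrite ler_pdivrMr ?subr_gt0 // mul1r lerD2l lerN2 ltW.
Qed.

Lemma hat_out x : x <= a \/ c <= x -> hat a b c x = 0.
Proof.
move=> xac; apply/max_idPl; rewrite ge_min; apply/orP.
by case: xac => ?; [left|right]; rewrite pmulr_lle0 ?invr_gt0 ?subr_gt0 ?subr_le0.
Qed.

End hat_shape.

Definition node (k : nat) : R := 2^-1 - k.+1%:R^-1.

Lemma ltr_node : {mono node : m n / (m < n)%N >-> m < n}.
Proof. by move=> m n; rewrite ltrD2l ltrN2 ltf_pV2 ?posrE ?ltr0n // ltr_nat ltnS. Qed.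

Lemma ler_node : {mono node : m n / (m <= n)%N >-> m <= n}.
Proof. by move=> m n; rewrite leNgt ltr_node -leqNgt. Qed.

Lemma node_lt_half k : node k < 2^-1.
Proof. by rewrite ltrBlDr ltrDl invr_gt0 ltr0n. Qed.

Lemma node1 : node 1 = 0.
Proof. exact: subrr. Qed.

Lemma node_cvg : node @ \oo --> (2^-1 : R).
Proof. by apply: cvg_trans (cvgB (cvg_cst _) (@cvg_harmonic R)) _; rewrite subr0. Qed.

Lemma half_lt1 : 2^-1 < 1 :> R.
Proof. by rewrite invf_lt1 ?ltr1n. Qed.

Lemma between_nodes k x : node k.+1 <= x <= node k.+2 -> 0 <= x < 2^-1.
Proof.
move=> /andP[kx xk]; rewrite (le_lt_trans xk (node_lt_half _)) andbT.
by apply: le_trans kx; rewrite -node1 ler_node.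
Qed.

Lemma squeeze_node_half (u : nat -> R) :
  (forall n, node n <= u n <= 2^-1) -> u @ \oo --> (2^-1 : R).
Proof.
by move=> u_node; apply: (squeeze_cvgr _ node_cvg (cvg_cst _)); exact: nearW.
Qed.

Lemma exists_node_gt x : x < 2^-1 -> exists k, x < node k.
Proof. by move=> /ltr_add_invr[k xk]; exists k; rewrite /node ltrBrDr. Qed.

Lemma node_bracket x : 0 <= x < 2^-1 -> exists k, node k.+1 <= x <= node k.+2.
Proof.
move=> /andP[x0 /exists_node_gt xk]; have [[|[|k]] xk' kmin] := ex_minnP xk.
- by move: xk'; rewrite ltNge (le_trans _ x0) // -node1 ler_node.
- by move: xk'; rewrite node1 ltNge x0.
- by exists k; rewrite (ltW xk') andbT leNgt; apply/negP => /kmin; rewrite ltnn.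
Qed.

Definition tent k : R -> R := hat (node k) (node k.+1) (node k.+2).

Lemma node_ltS k : node k < node k.+1.
Proof. by rewrite ltr_node. Qed.

Lemma tent_ge0 k x : 0 <= tent k x.
Proof. exact: hat_ge0. Qed.

Lemma tent_le1 k x : tent k x <= 1.
Proof. exact: hat_le1 (node_ltS _) (node_ltS _) _. Qed.

Lemma continuous_tent k : continuous (tent k).
Proof. exact: continuous_hat. Qed.

Lemma tent_out k x : x <= node k \/ node k.+2 <= x -> tent k x = 0.
Proof. exact: hat_out (node_ltS _) (node_ltS _) _. Qed.

Lemma tent_neq0 k x : tent k x != 0 -> node k < x < node k.+2.
Proof.
apply: contraNT; rewrite negb_and -!leNgt => /orP xk.
by apply/eqP/tent_out; case: xk; [left|right].
Qed.

Lemma tent_ge_half k x : 2^-1 <= x -> tent k x = 0.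
Proof. by move=> hx; apply: tent_out; right; exact/ltW/(lt_le_trans (node_lt_half _)). Qed.

Lemma tent_mul_eq0 k l x : (k.+1 < l)%N -> tent k x * tent l x = 0.
Proof.
move=> kl; apply/eqP; rewrite mulf_eq0; apply: contraT.
rewrite negb_or => /andP[/tent_neq0/andP[_ xk] /tent_neq0/andP[lx _]].
by move: (lt_trans lx xk); rewrite ltr_node ltnS leqNgt kl.
Qed.

Lemma tent_rise k x : node k <= x <= node k.+1 ->
  tent k x = (x - node k) / (node k.+1 - node k).
Proof. exact: hat_rise (node_ltS _) (node_ltS _) _. Qed.

Lemma tent_add_next k x : node k.+1 <= x <= node k.+2 -> tent k x + tent k.+1 x = 1.
Proof.
move=> xk; rewrite /tent hat_fall ?node_ltS // hat_rise ?node_ltS // -mulrDl.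
rewrite [_ + _](_ : _ = node k.+2 - node k.+1); last by ring.
by rewrite divff // subr_eq0 gt_eqF ?node_ltS.
Qed.

Lemma tent_other k j x : node k.+1 <= x <= node k.+2 -> j != k -> j != k.+1 ->
  tent j x = 0.
Proof.
move=> /andP[kx xk] jk jk1; apply: tent_out; have [jlt|kj] := ltnP j k.
  by right; apply: le_trans kx; rewrite ler_node.
left; apply: le_trans xk _; rewrite ler_node; lia.
Qed.

Lemma tent_hits k t : 0 <= t <= 1 ->
  exists x, node k <= x <= node k.+1 /\ tent k x = t.
Proof.
move=> /andP[t0 t1]; have dk : 0 < node k.+1 - node k by rewrite subr_gt0 node_ltS.
exists (node k + t * (node k.+1 - node k)).
have xk : node k <= node k + t * (node k.+1 - node k) <= node k.+1.
  by apply/andP; split; nra.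
by rewrite xk tent_rise // addrAC subrr add0r mulfK // gt_eqF.
Qed.

Section tent_series.
Variable s : nat -> nat.

Lemma sumf_tents_ge_half x : 2^-1 <= x -> sumf (fun n => tent (s n)) x = 0.
Proof.
by move=> hx; rewrite (@sumf_eventually0 _ _ _ _ 0) ?big_ord0 // => i _; exact: tent_ge_half.
Qed.

Lemma sumf_tents_between k i0 x : node k.+1 <= x <= node k.+2 ->
  (forall i, i != i0 -> s i != k /\ s i != k.+1) ->
  sumf (fun n => tent (s n)) x = tent (s i0) x.
Proof.
move=> xk si; apply: sumf_single => i /si[sik sik1].
exact: tent_other xk sik sik1.
Qed.

Hypothesis s_ge : forall n, (n <= s n)%N.

Lemma sumf_tents_le_node M x : x <= node M ->
  sumf (fun n => tent (s n)) x = \sum_(i < M) tent (s i) x.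
Proof.
move=> xM; apply: sumf_eventually0 => i Mi; apply: tent_out; left.
by apply: (le_trans xM); rewrite ler_node (leq_trans Mi).
Qed.

Lemma sumf_tents_locally (x : R) : x != 2^-1 -> exists2 u : R -> R, continuous u &
  \forall y \near x, sumf (fun n => tent (s n)) y = u y.
Proof.
case: ltgtP => // [/exists_node_gt[k xk]|hx] _.
  exists (fun y => \sum_(i < k) tent (s i) y).
    by apply: continuous_big => [|i _]; [exact: add_continuous|exact: continuous_tent].
  near=> y; apply/sumf_tents_le_node/ltW; near: y.
  exact: (open_nbhs_nbhs (conj (@open_lt _ _) xk)).
exists (fun=> 0); first by move=> y; exact: cvg_cst.
near=> y; apply/sumf_tents_ge_half/ltW; near: y.
exact: (open_nbhs_nbhs (conj (@open_gt _ _) hx)).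
Unshelve. all: by end_near.
Qed.

End tent_series.

Section tents_along.
Context {T : topologicalType} (pr : T -> R) (K : set T).
Hypothesis pr_cont : continuous pr.

Lemma inC1_tent k : inC1 K (tent k \o pr).
Proof.
split=> [|x _]; last by rewrite tent_ge0 tent_le1.
apply: continuous_subspaceT => x.
by apply: continuous_comp; [exact: pr_cont|exact: continuous_tent].
Qed.

Lemma pw_disjoint_tents (s : nat -> nat) :
  (forall m n, (m < n)%N -> (s m).+1 < s n)%N -> pw_disjoint K (fun n => tent (s n) \o pr).
Proof.
move=> s_gap m n /eqP; rewrite neq_ltn => /orP[] mn x _ /=; last rewrite mulrC;
  exact/tent_mul_eq0/s_gap.
Qed.

Lemma supp_tent k : supp K (tent k \o pr) `<=` [set y | node k <= pr y /\ pr y <= node k.+2].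
Proof.
apply: supp_sub => [|x _ /tent_neq0/andP[/ltW kx /ltW xk] //].
apply: closedI.
- by apply: (closed_preimage (D := [set r | node k <= r]) pr_cont); exact: closed_ge.
- by apply: (closed_preimage (D := [set r | r <= node k.+2]) pr_cont); exact: closed_le.
Qed.

Lemma Dset_tents (s : nat -> nat) x : (forall n, n <= s n)%N -> K x -> pr x != 2^-1 ->
  Dset K (fun n => tent (s n) \o pr) x.
Proof.
move=> s_ge Kx; case: ltgtP => // [/exists_node_gt[k xk]|hx] _.
  apply: (@Dset_intro _ _ _ _ _ (pr @^-1` [set r | r < node k]) k) => //.
    by apply: open_comp; [move=> y _; exact: pr_cont|exact: open_lt].
  move=> n y kn /= yk /supp_tent[+ _]; apply/negP; rewrite -ltNge.
  by apply: (lt_le_trans yk); rewrite ler_node (leq_trans kn).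
apply: (@Dset_intro _ _ _ _ _ (pr @^-1` [set r | 2^-1 < r]) 0) => //.
  by apply: open_comp; [move=> y _; exact: pr_cont|exact: open_gt].
move=> n y _ /= hy /supp_tent[_]; apply/negP; rewrite -ltNge.
exact: lt_trans (node_lt_half _) hy.
Qed.

End tents_along.

End tents.

Section construction.
Variable R : realType.

Definition odd_tent n : R -> R := tent (2 * n).+1.
Definition even_tent n : R -> R := tent (2 * n).
Definition odd_sum : R -> R := sumf odd_tent.
Definition even_sum : R -> R := sumf even_tent.

Lemma odd_sum_ge_half x : 2^-1 <= x -> odd_sum x = 0.
Proof. exact: (sumf_tents_ge_half (fun n => (2 * n).+1)). Qed.

Lemma even_sum_ge_half x : 2^-1 <= x -> even_sum x = 0.
Proof. exact: (sumf_tents_ge_half (fun n => 2 * n)%N). Qed.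

Lemma sums_on_rise n x : node (2 * n).+1 <= x <= node (2 * n).+2 ->
  odd_sum x = odd_tent n x /\ even_sum x = even_tent n x.
Proof.
move=> xn; split.
  by apply: (@sumf_tents_between _ _ (2 * n) n _ xn) => i /eqP ni; lia.
by apply: (@sumf_tents_between _ _ (2 * n) n _ xn) => i /eqP ni; lia.
Qed.

Lemma sums_on_fall n x : node (2 * n).+2 <= x <= node (2 * n).+3 ->
  odd_sum x = odd_tent n x /\ even_sum x = even_tent n.+1 x.
Proof.
move=> xn; split.
  by apply: (@sumf_tents_between _ _ (2 * n).+1 n _ xn) => i /eqP ni; lia.
by apply: (@sumf_tents_between _ _ (2 * n).+1 n.+1 _ xn) => i /eqP ni; lia.
Qed.

Lemma odd_add_even_sum x : 0 <= x < 2^-1 -> odd_sum x + even_sum x = 1.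
Proof.
move=> /node_bracket[k]; rewrite -[k]odd_double_half -mul2n.
case: (odd k); set m := k./2; rewrite /= ?add1n ?add0n => xk.
  have [-> ->] := sums_on_fall xk; rewrite /even_tent mulnS.
  exact: tent_add_next.
by have [-> ->] := sums_on_rise xk; rewrite addrC; exact: tent_add_next.
Qed.

Lemma odd_sum_node n : odd_sum (node (2 * n).+1) = 0.
Proof.
have [|-> _] := @sums_on_rise n (node (2 * n).+1); last by apply: tent_out; left.
by rewrite lexx ltW ?node_ltS.
Qed.

Lemma odd_sum_locally (x : R) : x != 2^-1 -> exists2 u : R -> R, continuous u &
  \forall y \near x, odd_sum y = u y.
Proof. by apply: (@sumf_tents_locally _ (fun n => (2 * n).+1)) => n; lia. Qed.

Lemma continuous_odd_sum_at (x : R) : x != 2^-1 -> {for x, continuous odd_sum}.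
Proof.
move=> /odd_sum_locally[u cu near_u].
have u_near : \forall y \near x, u y = odd_sum y by apply: filterS near_u.
by apply: cvg_trans (near_eq_cvg u_near) _; rewrite (nbhs_singleton near_u); exact: cu.
Qed.

Lemma inC1_odd_tent n : inC1 (@unit_int R) (odd_tent n).
Proof. by apply: (@inC1_tent _ _ id _ _ (2 * n).+1) => x; exact: cvg_id. Qed.

Lemma pw_disjoint_odd_tent : pw_disjoint (@unit_int R) odd_tent.
Proof.
by apply: (@pw_disjoint_tents _ _ id _ (fun n => (2 * n).+1)) => m n; lia.
Qed.

Definition sinK : set (R * R) := extension (@unit_int R) odd_tent.

Lemma sinK_graph x : 0 <= x <= 1 -> x != 2^-1 -> sinK (x, odd_sum x).
Proof.
move=> x01 xh; apply: extension_graph; [exact: inC1_odd_tent|exact: pw_disjoint_odd_tent|].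
by apply: (@Dset_tents _ _ id _ _ (fun n => (2 * n).+1)) => // [y|n]; [exact: cvg_id|lia].
Qed.

Lemma sinK_graph_left x : 0 <= x < 2^-1 -> sinK (x, odd_sum x).
Proof.
move=> /andP[x0 xh]; apply: sinK_graph; last by rewrite lt_eqF.
by rewrite x0 (le_trans (ltW xh)) ?ltW ?half_lt1.
Qed.

Lemma sinK_odd_sum p : sinK p -> p.1 != 2^-1 -> p.2 = odd_sum p.1.
Proof.
move=> [_ clp] /odd_sum_locally[u cu near_u].
rewrite (nbhs_singleton near_u); apply: closure_graph_near cu _ clp.
by apply: filterS near_u => z oz t [_ /= ->].
Qed.

Lemma compact_sinK : compact sinK.
Proof. by apply: compact_extension; rewrite unit_intE; exact: segment_compact. Qed.

Lemma closed_sinK : closed sinK.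
Proof.
apply: closed_extension; rewrite unit_intE.
by apply: compact_closed; [exact: Rhausdorff|exact: segment_compact].
Qed.

Definition left_graph : set (R * R) := (fun x => (x, odd_sum x)) @` `[0, 2^-1[.
Definition right_segment : set (R * R) := (fun x => (x, 0)) @` `[2^-1, 1].

Lemma connected_left_graph : connected left_graph.
Proof.
apply: connected_continuous_connected; first exact/connected_intervalP/interval_is_interval.
apply: continuous_in_subspaceT => x; rewrite inE /= in_itv /= => /andP[_ xh].
apply: (@cvg_pair _ _ _ _ (nbhs x) (nbhs (odd_sum x))); first exact: cvg_id.
by apply: continuous_odd_sum_at; rewrite lt_eqF.
Qed.

Lemma connected_right_segment : connected right_segment.
Proof.
apply: connected_continuous_connected; first exact/connected_intervalP/interval_is_interval.
apply: continuous_subspaceT => x.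
by apply: (@cvg_pair _ _ _ _ (nbhs x) (nbhs 0)); [exact: cvg_id|exact: cvg_cst].
Qed.

Lemma closure_left_graph_half : closure left_graph (2^-1, 0).
Proof.
apply: (@closed_cvg _ _ \oo _ (fun n => (node (2 * n).+1, 0)) _ (@closed_closure _ _)).
  apply: nearW => n; apply: subset_closure; exists (node (2 * n).+1).
    by rewrite /= in_itv /= node_lt_half andbT -node1 ler_node.
  by rewrite odd_sum_node.
apply: (@cvg_pair _ _ _ _ (nbhs (2^-1 : R)) (nbhs (0 : R))); last exact: cvg_cst.
by apply: squeeze_node_half => n; rewrite (ltW (node_lt_half _)) andbT ler_node; lia.
Qed.

Lemma sinK_closureU : sinK = closure left_graph `|` closure right_segment.
Proof.
have left_sinK : closure left_graph `<=` sinK.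
  rewrite closureE; apply: smallest_sub closed_sinK _.
  by move=> _ [x + <-]; rewrite /= in_itv /=; exact: sinK_graph_left.
apply/seteqP; split=> [p [_]|]; last first.
  rewrite subUset; split=> //; rewrite closureE; apply: smallest_sub closed_sinK _.
  move=> _ [x + <-]; rewrite /= in_itv /= => /andP[hx x1].
  have [->|xh] := eqVneq x 2^-1; first exact/left_sinK/closure_left_graph_half.
  rewrite -(odd_sum_ge_half hx); apply: sinK_graph xh.
  by rewrite x1 andbT (le_trans _ hx) // invr_ge0 ler0n.
rewrite -closureU; apply: closureS => -[x y] [[/andP[x0 x1] _] /= ->].
have [xh|hx] := ltP x 2^-1; [left|right]; exists x.
- by rewrite /= in_itv /= x0.
- by [].
- by rewrite /= in_itv /= hx.
- by rewrite -[sumf _ _]/(odd_sum x) odd_sum_ge_half.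
Qed.

Lemma connected_sinK : connected sinK.
Proof.
rewrite sinK_closureU; apply: connectedU.
- exists (2^-1, 0); split; first exact: closure_left_graph_half.
  by apply: subset_closure; exists 2^-1; rewrite //= in_itv /= lexx ltW ?half_lt1.
- exact: connected_closure connected_left_graph.
- exact: connected_closure connected_right_segment.
Qed.

Definition even_tent_fst n : R * R -> R := even_tent n \o fst.

Lemma inC1_even_tent_fst n : inC1 sinK (even_tent_fst n).
Proof. by apply: (@inC1_tent _ _ fst _ _ (2 * n)) => p; exact: cvg_fst. Qed.

Lemma pw_disjoint_even_tent_fst : pw_disjoint sinK even_tent_fst.
Proof. by apply: (@pw_disjoint_tents _ _ fst _ (fun n => 2 * n)%N) => m n; lia. Qed.

Lemma Dset_even_tent_fst p : sinK p -> p.1 != 2^-1 -> Dset sinK even_tent_fst p.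
Proof.
move=> Kp ph; apply: (@Dset_tents _ _ fst _ _ (fun n => 2 * n)%N) => // [q|n].
- exact: cvg_fst.
- lia.
Qed.

Lemma not_Dset_even_tent_fst_mid t : 0 < t < 1 -> ~ Dset sinK even_tent_fst (2^-1, t).
Proof.
move=> /andP[t0 t1]; have t01 : 0 <= t <= 1 by rewrite !ltW.
have [x xP] := @choice _ _
  (fun n y => node (2 * n).+1 <= y <= node (2 * n).+2 /\ odd_tent n y = t)
  (fun n => tent_hits (2 * n).+1 t01).
apply: (@not_Dset_cvg _ _ _ _ (fun n => (x n, t))) => [n|].
  have [xn xt] := xP n; have [odd_x _] := sums_on_rise xn.
  have sinKx : sinK (x n, t).
    by rewrite -xt -odd_x; apply: sinK_graph_left; exact: between_nodes xn.
  apply: (supp_neq0 sinKx); rewrite /even_tent_fst /= /even_tent.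
  rewrite (_ : tent (2 * n) (x n) = 1 - t) ?subr_eq0 ?gt_eqF //.
  by rewrite -(tent_add_next xn) -xt addrK.
apply: (@cvg_pair _ _ _ _ (nbhs (2^-1 : R)) (nbhs t)); last exact: cvg_cst.
apply: squeeze_node_half => n; have [/andP[xn1 xn2] _] := xP n.
rewrite (le_trans xn2 (ltW (node_lt_half _))) andbT (le_trans _ xn1) //.
by rewrite ler_node; lia.
Qed.

Definition sheet1 : set ((R * R) * R) := [set q | q.1.1 <= 2^-1 /\ q.1.2 + q.2 = 1].
Definition sheet0 : set ((R * R) * R) := [set q | 2^-1 <= q.1.1 /\ q.1.2 + q.2 = 0].

Lemma closed_sheets : closed sheet1 /\ closed sheet0.
Proof.
pose x (q : (R * R) * R) := q.1.1; pose yz (q : (R * R) * R) := q.1.2 + q.2.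
have cx : continuous x by move=> q; apply: continuous_comp; exact: cvg_fst.
have cyz : continuous yz.
  move=> q; apply: cvgD; last exact: cvg_snd.
  by apply: continuous_comp; [exact: cvg_fst|exact: cvg_snd].
split; apply: closedI.
- by apply: (closed_preimage (D := [set r : R | r <= 2^-1]) cx); exact: closed_le.
- by apply: (closed_preimage (D := [set r : R | r = 1]) cyz); exact: closed_eq.
- by apply: (closed_preimage (D := [set r : R | 2^-1 <= r]) cx); exact: closed_ge.
- by apply: (closed_preimage (D := [set r : R | r = 0]) cyz); exact: closed_eq.
Qed.

Lemma sheets_disjoint : sheet1 `&` sheet0 = set0.
Proof.
by apply/seteqP; split=> // q [[_ e1] [_]]; rewrite e1 => /eqP; rewrite oner_eq0.
Qed.

Lemma extension_sub_sheets : extension sinK even_tent_fst `<=` sheet1 `|` sheet0.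
Proof.
move=> q [_]; rewrite closureE; apply: smallest_sub.
  exact: closedU closed_sheets.1 closed_sheets.2.
move=> [[x y] z] [Dxy /= ->]; have sinKxy : sinK (x, y) := Dxy.1.
have [[/andP[x0 _] /andP[y0 y1]] _] := sinKxy.
have y_odd : x != 2^-1 -> y = odd_sum x := sinK_odd_sum sinKxy.
rewrite -[sumf _ _]/(even_sum x).
have [xh|hx|xh] := ltgtP x 2^-1.
- left; split; first exact: ltW.
  by rewrite /= y_odd ?lt_eqF // odd_add_even_sum // x0.
- right; split; first exact: ltW.
  by rewrite /= y_odd ?gt_eqF // odd_sum_ge_half ?even_sum_ge_half ?ltW ?addr0.
rewrite xh even_sum_ge_half //.
have [->|yn0] := eqVneq y 0; first by right; split; rewrite /= ?addr0.
have [->|yn1] := eqVneq y 1; first by left; split; rewrite /= ?addr0.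
exfalso; apply: (@not_Dset_even_tent_fst_mid y); last by rewrite -xh.
by rewrite !lt_neqAle eq_sym yn0 yn1 y0 y1.
Qed.

Lemma not_connected_extension_sinK : ~ connected (extension sinK even_tent_fst).
Proof.
have graph_pt p : sinK p -> p.1 != 2^-1 ->
    extension sinK even_tent_fst (p, even_sum p.1).
  move=> Kp ph; apply: extension_graph; last exact: Dset_even_tent_fst.
    exact: inC1_even_tent_fst.
  exact: pw_disjoint_even_tent_fst.
have [closed1 closed0] := closed_sheets.
apply: (not_connected_closed_cover closed1 closed0 sheets_disjoint extension_sub_sheets).
- have odd0 : odd_sum 0 = 0 by have := odd_sum_node 0; rewrite muln0 node1.
  have K00 : sinK (0, 0).
    by rewrite -{2}odd0; apply: sinK_graph_left; rewrite lexx invr_gt0 ltr0n.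
  exists (0, 0, even_sum 0); split; first by apply: graph_pt; rewrite //= eq_sym invr_eq0.
  split; first by rewrite /= invr_ge0 ler0n.
  by rewrite /= -{1}odd0 odd_add_even_sum // lexx invr_gt0 ltr0n.
- have half1 : 2^-1 <= 1 :> R by rewrite ltW ?half_lt1.
  have K10 : sinK (1, 0).
    rewrite -(odd_sum_ge_half half1); apply: sinK_graph.
      by rewrite lexx ler01.
    by rewrite gt_eqF ?half_lt1.
  exists (1, 0, even_sum 1); split; first by apply: graph_pt; rewrite //= gt_eqF ?half_lt1.
  by split; rewrite //= even_sum_ge_half ?addr0.
Qed.

End construction.

Theorem theorem4p2 (R : realType) :
  exists (K : set (R * R)) (g : nat -> R -> R) (f : nat -> R * R -> R),
    [/\ (forall n, inC1 (@unit_int R) (g n)) /\ pw_disjoint (@unit_int R) g,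
        K = extension (@unit_int R) g,
        compact K /\ connected K,
        (forall n, inC1 K (f n)) /\ pw_disjoint K f &
        ~ connected (extension K f)].
Proof.
exists (@sinK R), (@odd_tent R), (@even_tent_fst R); split => //.
- by split; [exact: inC1_odd_tent|exact: pw_disjoint_odd_tent].
- by split; [exact: compact_sinK|exact: connected_sinK].
- by split; [exact: inC1_even_tent_fst|exact: pw_disjoint_even_tent_fst].
- exact: not_connected_extension_sinK.
Qed.
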